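(* Let $d>1$ and let $\mathcal{H}_1,\dots,\mathcal{H}_d$ be separable Hilbert spaces, $\mathcal{H}=\bigotimes_{j=1}^d\mathcal{H}_j$. Let $r\ge 1$ and, for each $j\in\{1,\dots,d\}$ and $k\in\{1,\dots,r\}$, let $\{f_{j,k,n}\}_{n>0}$ be a sequence in $\mathcal{H}_j$, such that for each $j$ the $r$ sequences $\{f_{j,1,n}\}_{n>0},\dots,\{f_{j,r,n}\}_{n>0}$ are linearly independent. Let $\mathcal{F}=\{f_{n_1,\dots,n_d}\}_{n_1,\dots,n_d>0}$ be the sequence in $\mathcal{H}$ given by $$f_{n_1,\dots,n_d}=\sum_{k=1}^r \bigotimes_{j=1}^d f_{j,k,n_j}.$$ Then: (i) $\mathcal{F}$ is a Bessel sequence in $\mathcal{H}$ if and only if $\{f_{j,k,n}\}_{n>0}$ is a Bessel sequence in $\mathcal{H}_j$ for each $(j,k)\in\{1,\dots,d\}\times\{1,\dots,r\}$. (ii) If $\mathcal{F}$ is a frame for $\mathcal{H}$, then for each $j=1,\dots,d$ the concatenated sequence $\{f_{j,k,n}\}_{1\le k\le r,\,n>0}$ is a frame for $\mathcal{H}_j$.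
   Context: A sequence $\{f_n\}$ in a Hilbert space $\mathcal{H}$ is a Bessel sequence if there is $B>0$ with $\sum_n|\langle f,f_n\rangle|^2\le B\|f\|^2$ for all $f\in\mathcal{H}$; it is a frame if moreover there is $A>0$ with $A\|f\|^2\le\sum_n|\langle f,f_n\rangle|^2$ for all $f$. Linear independence of sequences is meant in the vector space of all sequences in $\mathcal{H}_j$ (i.e. no nontrivial linear combination $\sum_k c_k f_{j,k,n}$ vanishes for all $n$). *)

From HB Require Import structures.
From mathcomp Require Import all_boot all_order all_algebra.
From mathcomp Require Import complex.
From mathcomp Require Import boolp classical_sets functions reals ereal esum.
Set Implicit Arguments. Unset Strict Implicit. Unset Printing Implicit Defensive.
Import Order.TTheory GRing.Theory Num.Theory.
Local Open Scope classical_set_scope.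
Local Open Scope ring_scope.

(* Concrete model of separable complex Hilbert spaces:
   l2(S) = { x : T -> C | x vanishes outside S, sum_i |x i|^2 < oo }
   for a countable index set S.  Every separable Hilbert space is unitarily
   isomorphic to some l2(S) with S a subset of nat. *)

Definition abs2 (R : realType) (z : R[i]) : R := complex.Re z ^+ 2 + complex.Im z ^+ 2.

Section L2.
Variables (R : realType) (T : choiceType).

Definition sqnorm (x : T -> R[i]) : \bar R :=
  esum setT (fun i => (abs2 (x i))%:E).

Definition l2 (S : set T) : set (T -> R[i]) :=
  [set x | (forall i, ~ S i -> x i = 0) /\ (sqnorm x < +oo)%E].

Definition rsum (u : T -> R) : R :=
  fine (esum setT (fun i => (Num.max (u i) 0)%:E))
  - fine (esum setT (fun i => (Num.max (- u i) 0)%:E)).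

Definition csum (u : T -> R[i]) : R[i] :=
  Complex (rsum (fun i => complex.Re (u i))) (rsum (fun i => complex.Im (u i))).

Definition inner (x y : T -> R[i]) : R[i] := csum (fun i => x i * conjc (y i)).

Definition bessel (N : choiceType) (S : set T) (g : N -> T -> R[i]) : Prop :=
  (forall n, l2 S (g n)) /\
  exists B : R, 0 < B /\
    forall x, l2 S x ->
      (esum setT (fun n => (abs2 (inner x (g n)))%:E)
        <= B%:E * sqnorm x)%E.

Definition frame (N : choiceType) (S : set T) (g : N -> T -> R[i]) : Prop :=
  bessel S g /\
  exists A : R, 0 < A /\
    forall x, l2 S x ->
      (A%:E * sqnorm x
        <= esum setT (fun n => (abs2 (inner x (g n)))%:E))%E.

End L2.

(* Hilbert tensor product  l2(I_1) (x) ... (x) l2(I_d) = l2(I_1 x ... x I_d),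
   with multi-indices t : {ffun 'I_d -> nat}; the elementary tensor
   x_1 (x) ... (x) x_d is t |-> prod_j x_j (t j). *)
Definition prodset (d : nat) (I : 'I_d -> set nat) : set {ffun 'I_d -> nat} :=
  [set t | forall j, I j (t j)].

Definition tensor (R : realType) (d : nat) (x : 'I_d -> nat -> R[i])
  : {ffun 'I_d -> nat} -> R[i] :=
  fun t => \prod_(j < d) x j (t j).

Definition Fseq (R : realType) (d r : nat)
  (f : 'I_d -> 'I_r -> nat -> nat -> R[i])
  : {ffun 'I_d -> nat} -> {ffun 'I_d -> nat} -> R[i] :=
  fun m => fun t => \sum_(k < r) tensor (fun j => f j k (m j)) t.

From HB Require Import structures.
From mathcomp Require Import all_boot all_order all_algebra.
From mathcomp Require Import complex.
From mathcomp Require Import boolp classical_sets functions reals ereal esum fsbigop numfun.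
From mathcomp Require Import ring lra.

(* If every f_(j,k) is a Bessel sequence with bound B_(j,k), integrating out one
   coordinate at a time shows that the elementary tensors (x)_j f_(j,k,n_j) form a
   Bessel sequence with bound prod_j B_(j,k), and F is a sum of r such sequences.

   Conversely, fix j and a point p whose coordinates lie in the supports, and put
   x in H_j on the line through p in direction j.  Then
     <x on the line, F_m> = sum_k conj (u_k(m, p)) <x, f_(j,k,m_j)>,
     u_k(m, p) = prod_(i <> j) f_(i,k,m_i)(p_i).
   Linear independence of the families in the other coordinates makes the vectors
   (u_k(m, p))_k span C^r, so each sequence <x, f_(j,k,n)> is a finite linear
   combination of restrictions of the coefficient sequence of F and inherits its
   Bessel bound.  For (ii), the same identity with p fixed bounds
   sum_m |<x on the line, F_m>|^2 by a constant times sum_(k,n) |<x, f_(j,k,n)>|^2,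
   which transfers the lower frame bound of F to the concatenated sequence. *)

Import Order.TTheory GRing.Theory Num.Theory.
Local Open Scope classical_set_scope.
Local Open Scope ring_scope.
Set Implicit Arguments. Unset Strict Implicit. Unset Printing Implicit Defensive.

Section nonneg_esum.
Variable R : realType.
Local Open Scope ereal_scope.

Lemma esumZl (T : choiceType) (c : R) (a : T -> \bar R) :
  (0 <= c)%R -> (forall t, 0 <= a t) ->
  esum setT (fun t => c%:E * a t) = c%:E * esum setT a.
Proof.
move=> c0 a0; rewrite /esum -ereal_supZl//; last first.
  by apply/set0P; exists 0; exists set0; [exact: fsets_set0|rewrite fsbig_set0].
congr ereal_sup; apply/seteqP; split=> x /=.
  by move=> [A HA <-]; exists (\sum_(i \in A) a i); [exists A|rewrite ge0_mule_fsumr].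
by move=> [y [A HA <-] <-]; exists A => //; rewrite ge0_mule_fsumr.
Qed.

Lemma esum_range (T T' : choiceType) (e : T' -> T) (a : T -> \bar R) :
  injective e -> (forall t, 0 <= a t) -> (forall t, ~ range e t -> a t = 0) ->
  esum setT a = esum setT (a \o e).
Proof.
move=> e_inj a0 a_out; rewrite (esumID (range e)) // setTI.
rewrite [X in _ + X]esum1 ?adde0; last by move=> t [_ /a_out].
by rewrite (esum_image setT e a) // => x y _ _ /e_inj.
Qed.

Lemma esum_supp1 (T : choiceType) (s : T) (a : T -> \bar R) :
  (forall t, 0 <= a t) -> (forall t, t <> s -> a t = 0) -> esum setT a = a s.
Proof.
move=> a0 a_out; rewrite (esumID [set s]) // setTI esum_set1 //.
by rewrite [X in _ + X]esum1 ?adde0 // => t [_ /a_out].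
Qed.

Lemma le_esum_comp (T T' : choiceType) (e : T' -> T) (a : T -> \bar R) :
  injective e -> (forall t, 0 <= a t) -> esum setT (a \o e) <= esum setT a.
Proof.
move=> e_inj a0; rewrite -(esum_image setT e a); last by move=> x y _ _ /e_inj.
by rewrite [leRHS](esumID (e @` setT)) // setTI leeDl // esum_ge0.
Qed.

Lemma esum_fibers (T K : choiceType) (p : T -> K) (a : T -> \bar R) :
  (forall t, 0 <= a t) ->
  esum setT a = esum setT (fun k => esum setT (fun t => if p t == k then a t else 0)).
Proof.
move=> a0.
rewrite (@esum_esum _ _ _ setT (fun _ => setT)
  (fun k t => if p t == k then a t else 0)); last by move=> *; case: ifP.
have -> : [set: K] `*`` (fun _ => [set: T]) = setT by apply/seteqP; split.
rewrite (esum_range (e := fun t => (p t, t))).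
- by apply: eq_esum => t _ /=; rewrite eqxx.
- by move=> x y [_ ->].
- by move=> [k t]; case: ifP.
- move=> [k t] /= kt_out; case: eqP => // ptk; exfalso; apply: kt_out.
  by exists t; rewrite ?ptk.
Qed.

Lemma esum_pair (K : finType) (T : choiceType) (a : K * T -> \bar R) :
  (forall x, 0 <= a x) -> esum setT a = \sum_(k : K) esum setT (fun t => a (k, t)).
Proof.
move=> a0.
rewrite (eq_esum (b := fun x => \sum_(k : K) (if x.1 == k then a x else 0))); last first.
  move=> x _; rewrite (bigD1 x.1) //= eqxx big1 ?adde0 // => k.
  by rewrite eq_sym => /negbTE ->.
rewrite (@esum_sum R _ _ setT (index_enum K) xpredT
  (fun x k => if x.1 == k then a x else 0)); last by move=> x k _ _; case: ifP.
apply: eq_bigr => k _; rewrite (esum_range (e := pair k)).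
- by apply: eq_esum => t _ /=; rewrite eqxx.
- by move=> t t' [].
- by move=> x; case: ifP.
- move=> [k' t] /= kt_out; case: eqP => // k'k; exfalso; apply: kt_out.
  by exists t; rewrite ?k'k.
Qed.

Lemma esumD_EFin (T : choiceType) (a b : T -> R) :
  (forall t, 0 <= a t)%R -> (forall t, 0 <= b t)%R ->
  esum setT (fun t => (a t + b t)%:E) =
  esum setT (fun t => (a t)%:E) + esum setT (fun t => (b t)%:E).
Proof.
by move=> a0 b0; rewrite -esumD // => t _; rewrite lee_fin.
Qed.

Lemma esumZ_EFin (T : choiceType) (c : R) (a : T -> R) :
  (0 <= c)%R -> (forall t, 0 <= a t)%R ->
  esum setT (fun t => (c * a t)%:E) = c%:E * esum setT (fun t => (a t)%:E).
Proof. by move=> c0 a0; rewrite -esumZl // => t; rewrite lee_fin. Qed.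

Lemma esum_sum_EFin (K T : choiceType) (s : seq K) (h : K -> T -> R) :
  (forall k t, 0 <= h k t)%R ->
  esum setT (fun t => (\sum_(k <- s) h k t)%:E) =
  \sum_(k <- s) esum setT (fun t => (h k t)%:E).
Proof.
move=> h0; under eq_esum do rewrite -sumEFin.
by rewrite (@esum_sum R T K setT s xpredT (fun t k => (h k t)%:E)) // => *; rewrite lee_fin.
Qed.

Lemma esum_EFin_fin_num (T : choiceType) (a : T -> R) :
  (forall t, 0 <= a t)%R -> esum setT (fun t => (a t)%:E) < +oo ->
  esum setT (fun t => (a t)%:E) \is a fin_num.
Proof. by move=> a0; rewrite ge0_fin_numE // esum_ge0 // => t _; rewrite lee_fin. Qed.

Lemma esum_EFin_lt_pinfty (T : choiceType) (a b : T -> R) :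
  (forall t, a t <= b t)%R ->
  esum setT (fun t => (b t)%:E) < +oo -> esum setT (fun t => (a t)%:E) < +oo.
Proof. by move=> ab; apply: le_lt_trans; apply: le_esum => t _; rewrite lee_fin. Qed.

Lemma fine_esumD_EFin (T : choiceType) (a b : T -> R) :
  (forall t, 0 <= a t)%R -> (forall t, 0 <= b t)%R ->
  esum setT (fun t => (a t)%:E) < +oo -> esum setT (fun t => (b t)%:E) < +oo ->
  fine (esum setT (fun t => (a t + b t)%:E)) =
  (fine (esum setT (fun t => (a t)%:E)) + fine (esum setT (fun t => (b t)%:E)))%R.
Proof.
by move=> a0 b0 a_fin b_fin; rewrite esumD_EFin // fineD // esum_EFin_fin_num.
Qed.

Lemma fineZ_ge0 (c : R) (x : \bar R) : (0 <= c)%R -> fine (c%:E * x) = (c * fine x)%R.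
Proof.
rewrite le_eqVlt => /predU1P[<- | c0]; first by rewrite mul0e mul0r.
by case: x => [x||] /=; rewrite ?mulr0 ?gt0_muley ?gt0_muleNy.
Qed.

End nonneg_esum.

Section real_sums.
Variable R : realType.

Definition rsummable (T : choiceType) (u : T -> R) := summable setT (fun t => (u t)%:E).

Lemma rsummableE (T : choiceType) (u : T -> R) :
  rsummable u = (esum setT (fun t => (`|u t|)%:E) < +oo)%E.
Proof. by []. Qed.

Lemma rsumE (T : choiceType) (u : T -> R) :
  rsum u = fine (esum setT (fun t => (u^\+ t)%:E)) - fine (esum setT (fun t => (u^\- t)%:E)).
Proof. by []. Qed.

Lemma funrposBnegE (T : Type) (u : T -> R) t : u^\+ t - u^\- t = u t.
Proof. by rewrite -[in RHS](funrposBneg u). Qed.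

Lemma funrposDnegE (T : Type) (u : T -> R) t : u^\+ t + u^\- t = `|u t|.
Proof. by rewrite -[`|u t|]/((Num.norm \o u) t) -funrposDneg. Qed.

Lemma rsummable_funrpos (T : choiceType) (u : T -> R) :
  rsummable u -> (esum setT (fun t => (u^\+ t)%:E) < +oo)%E.
Proof.
by apply: esum_EFin_lt_pinfty => t; rewrite -funrposDnegE lerDl funrneg_ge0.
Qed.

Lemma rsummable_funrneg (T : choiceType) (u : T -> R) :
  rsummable u -> (esum setT (fun t => (u^\- t)%:E) < +oo)%E.
Proof.
by apply: esum_EFin_lt_pinfty => t; rewrite -funrposDnegE lerDr funrpos_ge0.
Qed.

Lemma rsumB_nneg (T : choiceType) (a b : T -> R) :
  (forall t, 0 <= a t) -> (forall t, 0 <= b t) ->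
  (esum setT (fun t => (a t)%:E) < +oo)%E -> (esum setT (fun t => (b t)%:E) < +oo)%E ->
  rsum (fun t => a t - b t) =
  fine (esum setT (fun t => (a t)%:E)) - fine (esum setT (fun t => (b t)%:E)).
Proof.
move=> a0 b0 a_fin b_fin; set u := fun t => a t - b t.
have pos_le t : u^\+ t <= a t by rewrite ge_max a0 andbT lerBlDr lerDl.
have neg_le t : u^\- t <= b t by rewrite ge_max b0 andbT opprB lerBlDr lerDl.
have pos_fin := esum_EFin_lt_pinfty pos_le a_fin.
have neg_fin := esum_EFin_lt_pinfty neg_le b_fin.
have : esum setT (fun t => (u^\+ t + b t)%:E) = esum setT (fun t => (u^\- t + a t)%:E).
  by apply: eq_esum => t _; have := funrposBnegE u t; rewrite /u => ut; congr EFin; lra.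
move/(congr1 fine).
rewrite (fine_esumD_EFin (a := u^\+) (b := b)) // (fine_esumD_EFin (a := u^\-) (b := a)) //.
by rewrite rsumE; lra.
Qed.

Lemma ge0_rsumE (T : choiceType) (a : T -> R) :
  (forall t, 0 <= a t) -> rsum a = fine (esum setT (fun t => (a t)%:E)).
Proof.
move=> a0; have a0' : forall t, [set: T] t -> 0 <= a t by [].
rewrite rsumE [X in _ - fine X]esum1 ?subr0; last first.
  by move=> t _; rewrite (ge0_funrnegE a0') ?in_setT.
by congr fine; apply: eq_esum => t _; rewrite (ge0_funrposE a0') ?in_setT.
Qed.

Lemma rsum_eq0 (T : choiceType) (u : T -> R) : (forall t, u t = 0) -> rsum u = 0.
Proof.
by move=> u0; rewrite ge0_rsumE ?esum1 // => t; rewrite u0.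
Qed.

Lemma rsumD (T : choiceType) (u v : T -> R) : rsummable u -> rsummable v ->
  rsum (fun t => u t + v t) = rsum u + rsum v.
Proof.
move=> su sv.
have -> : (fun t => u t + v t) = (fun t => (u^\+ t + v^\+ t) - (u^\- t + v^\- t)).
  by apply/funext => t; rewrite -(funrposBnegE u) -(funrposBnegE v); ring.
have pos0 t : 0 <= u^\+ t + v^\+ t by rewrite addr_ge0 ?funrpos_ge0.
have neg0 t : 0 <= u^\- t + v^\- t by rewrite addr_ge0 ?funrneg_ge0.
have pos_fin : (esum setT (fun t => (u^\+ t + v^\+ t)%:E) < +oo)%E.
  by rewrite esumD_EFin ?lte_add_pinfty ?rsummable_funrpos.
have neg_fin : (esum setT (fun t => (u^\- t + v^\- t)%:E) < +oo)%E.
  by rewrite esumD_EFin ?lte_add_pinfty ?rsummable_funrneg.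
rewrite rsumB_nneg // (fine_esumD_EFin (a := u^\+) (b := v^\+)) ?rsummable_funrpos //.
rewrite (fine_esumD_EFin (a := u^\-) (b := v^\-)) ?rsummable_funrneg //.
by rewrite !rsumE; ring.
Qed.

Lemma rsumN (T : choiceType) (u : T -> R) : rsum (fun t => - u t) = - rsum u.
Proof. by rewrite !rsumE funrposN funrnegN opprB. Qed.

Lemma rsumZ (T : choiceType) (c : R) (u : T -> R) :
  rsum (fun t => c * u t) = c * rsum u.
Proof.
rewrite !rsumE; have [c0|c0] := leP 0 c.
  by rewrite ge0_funrposM // ge0_funrnegM // !esumZ_EFin ?fineZ_ge0 //; ring.
have c0' : 0 <= - c by rewrite oppr_ge0 ltW.
by rewrite le0_funrposM ?ltW // le0_funrnegM ?ltW // !esumZ_EFin ?fineZ_ge0 //; ring.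
Qed.

Lemma rsum_range (T T' : choiceType) (e : T' -> T) (u : T -> R) :
  injective e -> (forall t, ~ range e t -> u t = 0) -> rsum u = rsum (u \o e).
Proof.
move=> e_inj u_out; rewrite !rsumE.
rewrite (esum_range (a := fun t => (u^\+ t)%:E) e_inj); last 2 first.
- by move=> t; rewrite lee_fin funrpos_ge0.
- by move=> t /u_out ut0; rewrite /funrpos ut0 maxxx.
rewrite (esum_range (a := fun t => (u^\- t)%:E) e_inj) //.
- by move=> t; rewrite lee_fin funrneg_ge0.
- by move=> t /u_out ut0; rewrite /funrneg ut0 oppr0 maxxx.
Qed.

Lemma rsum_supp1 (T : choiceType) (s : T) (u : T -> R) :
  (forall t, t <> s -> u t = 0) -> rsum u = u s.
Proof.
move=> u_out; rewrite rsumE !(esum_supp1 (s := s)) ?funrposBnegE //.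
- by move=> t; rewrite lee_fin funrneg_ge0.
- by move=> t /u_out ut0; rewrite /funrneg ut0 oppr0 maxxx.
- by move=> t; rewrite lee_fin funrpos_ge0.
- by move=> t /u_out ut0; rewrite /funrpos ut0 maxxx.
Qed.

Lemma rsum_fibers (T K : choiceType) (p : T -> K) (u : T -> R) : rsummable u ->
  rsum u = rsum (fun k => rsum (fun t => if p t == k then u t else 0)).
Proof.
move=> su; pose fiber (a : T -> R) k t := if p t == k then a t else 0.
have fiber_ge0 a k t : (forall t, 0 <= a t) -> 0 <= fiber a k t.
  by move=> a0; rewrite /fiber; case: ifP => // _; exact: a0.
have fiber_fin a k : (forall t, 0 <= a t) -> (esum setT (fun t => (a t)%:E) < +oo)%E ->
    (esum setT (fun t => (fiber a k t)%:E) < +oo)%E.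
  move=> a0; apply: esum_EFin_lt_pinfty => t.
  by rewrite /fiber; case: ifP => // _; exact: a0.
have esum_fine_fibers a : (forall t, 0 <= a t) -> (esum setT (fun t => (a t)%:E) < +oo)%E ->
    esum setT (fun k => (fine (esum setT (fun t => (fiber a k t)%:E)))%:E) =
    esum setT (fun t => (a t)%:E).
  move=> a0 a_fin; rewrite (esum_fibers p); last by move=> t; rewrite lee_fin.
  apply: eq_esum => k _; have fk0 t : 0 <= fiber a k t by exact: fiber_ge0.
  rewrite fineK; last exact: esum_EFin_fin_num fk0 (fiber_fin a k a0 a_fin).
  by apply: eq_esum => t _; rewrite /fiber; case: ifP.
have fiber_parts : forall k, rsum (fiber u k) =
    fine (esum setT (fun t => (fiber u^\+ k t)%:E)) -
    fine (esum setT (fun t => (fiber u^\- k t)%:E)).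
  move=> k; rewrite rsumE; have -> : (fiber u k)^\+ = fiber u^\+ k.
    by apply/funext => t; rewrite /fiber /funrpos; case: ifP; rewrite ?maxxx.
  have -> // : (fiber u k)^\- = fiber u^\- k.
  by apply/funext => t; rewrite /fiber /funrneg; case: ifP; rewrite ?oppr0 ?maxxx.
have pos0 := funrpos_ge0 u; have neg0 := funrneg_ge0 u.
have pos_fin := rsummable_funrpos su; have neg_fin := rsummable_funrneg su.
rewrite (eq_fun fiber_parts) rsumB_nneg ?esum_fine_fibers //.
- by move=> k; apply: fine_ge0; apply: esum_ge0 => t _; rewrite lee_fin fiber_ge0.
- by move=> k; apply: fine_ge0; apply: esum_ge0 => t _; rewrite lee_fin fiber_ge0.
Qed.

End real_sums.

Section complex_sums.
Variable R : realType.
Local Notation C := R[i].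
Local Notation Re := (@complex.Re R).
Local Notation Im := (@complex.Im R).

Lemma complexP (x y : C) : Re x = Re y -> Im x = Im y -> x = y.
Proof. by case: x; case: y => /= a b c d -> ->. Qed.

Lemma ReM (x y : C) : Re (x * y) = Re x * Re y - Im x * Im y.
Proof. by case: x => a b; case: y. Qed.

Lemma ImM (x y : C) : Im (x * y) = Re x * Im y + Im x * Re y.
Proof. by case: x => a b; case: y => c d /=; ring. Qed.

Definition csummable (T : choiceType) (u : T -> C) :=
  rsummable (fun t => Re (u t)) /\ rsummable (fun t => Im (u t)).

Lemma rsummable_le (T : choiceType) (u v : T -> R) :
  (forall t, `|u t| <= v t) -> (esum setT (fun t => (v t)%:E) < +oo)%E -> rsummable u.
Proof. by rewrite rsummableE; apply: esum_EFin_lt_pinfty. Qed.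

Lemma rsummableD (T : choiceType) (u v : T -> R) :
  rsummable u -> rsummable v -> rsummable (fun t => u t + v t).
Proof.
rewrite !rsummableE => su sv; apply: (@rsummable_le _ _ (fun t => `|u t| + `|v t|)).
  by move=> t; apply: ler_normD.
by rewrite esumD_EFin ?lte_add_pinfty.
Qed.

Lemma rsummableZ (T : choiceType) (c : R) (u : T -> R) :
  rsummable u -> rsummable (fun t => c * u t).
Proof.
rewrite rsummableE => su; apply: (@rsummable_le _ _ (fun t => `|c| * `|u t|)).
  by move=> t; rewrite normrM.
by rewrite esumZ_EFin ?lte_mul_pinfty.
Qed.

Lemma rsummableN (T : choiceType) (u : T -> R) :
  rsummable u -> rsummable (fun t => - u t).
Proof. by move=> su; apply: (@rsummable_le _ _ (fun t => `|u t|)) => // t; rewrite normrN. Qed.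

Lemma csummableD (T : choiceType) (u v : T -> C) :
  csummable u -> csummable v -> csummable (fun t => u t + v t).
Proof.
move=> [su1 su2] [sv1 sv2]; split.
  by under eq_fun do rewrite raddfD; exact: rsummableD.
by under eq_fun do rewrite raddfD; exact: rsummableD.
Qed.

Lemma csummableZ (T : choiceType) (c : C) (u : T -> C) :
  csummable u -> csummable (fun t => c * u t).
Proof.
move=> [su1 su2]; split.
  under eq_fun do rewrite ReM.
  by apply: rsummableD; [exact: rsummableZ | exact/rsummableN/rsummableZ].
by under eq_fun do rewrite ImM; apply: rsummableD; exact: rsummableZ.
Qed.

Lemma csummable_sum (T : choiceType) (K : Type) (s : seq K) (F : K -> T -> C) :
  (forall k, csummable (F k)) -> csummable (fun t => \sum_(k <- s) F k t).
Proof.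
move=> sF; elim: s => [|k s IH].
  under eq_fun do rewrite big_nil.
  by split; rewrite rsummableE esum1 // => t _; rewrite normr0.
by under eq_fun do rewrite big_cons; exact: csummableD.
Qed.

Lemma csum_eq0 (T : choiceType) (u : T -> C) : (forall t, u t = 0) -> csum u = 0.
Proof. by move=> u0; rewrite /csum !rsum_eq0 // => t; rewrite u0. Qed.

Lemma csumD (T : choiceType) (u v : T -> C) : csummable u -> csummable v ->
  csum (fun t => u t + v t) = csum u + csum v.
Proof.
move=> [su1 su2] [sv1 sv2]; apply: complexP => /=.
  by rewrite -rsumD //; under eq_fun do rewrite raddfD.
by rewrite -rsumD //; under eq_fun do rewrite raddfD.
Qed.

Lemma csumZ (T : choiceType) (c : C) (u : T -> C) : csummable u ->
  csum (fun t => c * u t) = c * csum u.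
Proof.
move=> [su1 su2]; apply: complexP => /=; rewrite ?ReM ?ImM.
  under eq_fun do rewrite ReM.
  by rewrite rsumD ?rsumN ?rsumZ //; [exact: rsummableZ | exact/rsummableN/rsummableZ].
under eq_fun do rewrite ImM.
by rewrite rsumD ?rsumZ //; exact: rsummableZ.
Qed.

Lemma csum_sum (T : choiceType) (K : Type) (s : seq K) (F : K -> T -> C) :
  (forall k, csummable (F k)) ->
  csum (fun t => \sum_(k <- s) F k t) = \sum_(k <- s) csum (F k).
Proof.
move=> sF; elim: s => [|k s IH].
  by rewrite big_nil csum_eq0 // => t; rewrite big_nil.
rewrite big_cons -IH -csumD //; last exact: csummable_sum.
by under eq_fun do rewrite big_cons.
Qed.

Lemma csum_range (T T' : choiceType) (e : T' -> T) (u : T -> C) :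
  injective e -> (forall t, ~ range e t -> u t = 0) -> csum u = csum (u \o e).
Proof.
move=> e_inj u_out; rewrite /csum (rsum_range (u := fun t => Re (u t)) e_inj).
  by rewrite (rsum_range (u := fun t => Im (u t)) e_inj) // => t /u_out ->.
by move=> t /u_out ->.
Qed.

Lemma csum_supp1 (T : choiceType) (s : T) (u : T -> C) :
  (forall t, t <> s -> u t = 0) -> csum u = u s.
Proof.
move=> u_out; rewrite /csum !(rsum_supp1 (s := s)); first by case: (u s).
  by move=> t /u_out ->.
by move=> t /u_out ->.
Qed.

Lemma csum_fibers (T K : choiceType) (p : T -> K) (u : T -> C) : csummable u ->
  csum u = csum (fun k => csum (fun t => if p t == k then u t else 0)).
Proof.
move=> [su1 su2]; apply: complexP; rewrite /= (rsum_fibers p) //;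
  by congr rsum; apply/funext => k; congr rsum; apply/funext => t; case: ifP.
Qed.

End complex_sums.

Section l2_inner.
Variable R : realType.
Local Notation C := R[i].

Lemma abs2_ge0 (x : C) : 0 <= abs2 x.
Proof. by rewrite addr_ge0 ?sqr_ge0. Qed.

Lemma abs20 : abs2 (0 : C) = 0.
Proof. by rewrite /abs2 /= expr0n addr0. Qed.

Lemma abs21 : abs2 (1 : C) = 1.
Proof. by rewrite /abs2 /= expr0n expr1n addr0. Qed.

Lemma abs2J (x : C) : abs2 (conjc x) = abs2 x.
Proof. by case: x => a b; rewrite /abs2 /= sqrrN. Qed.

Lemma abs2M (x y : C) : abs2 (x * y) = abs2 x * abs2 y.
Proof. by case: x => a b; case: y => c d; rewrite /abs2 /=; ring. Qed.

Lemma abs2_prod (K : Type) (s : seq K) (P : pred K) (F : K -> C) :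
  abs2 (\prod_(k <- s | P k) F k) = \prod_(k <- s | P k) abs2 (F k).
Proof. exact: (big_morph _ abs2M abs21). Qed.

Lemma abs2D_le (x y : C) : abs2 (x + y) <= 2 * abs2 x + 2 * abs2 y.
Proof.
case: x => a b; case: y => c e; rewrite /abs2 /=.
by have := sqr_ge0 (a - c); have := sqr_ge0 (b - e); rewrite !expr2 => *; nra.
Qed.

(* A crude substitute for Cauchy-Schwarz: any constant depending only on [size s] will do. *)
Lemma abs2_sum_le (K : Type) (s : seq K) (F : K -> C) :
  abs2 (\sum_(k <- s) F k) <= 2 ^+ size s * \sum_(k <- s) abs2 (F k).
Proof.
elim: s => [|k s IH]; first by rewrite !big_nil abs20 mulr0.
rewrite !big_cons exprS; apply: le_trans (abs2D_le _ _) _.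
have Fk0 := abs2_ge0 (F k).
have sum0 : 0 <= \sum_(k <- s) abs2 (F k) by rewrite sumr_ge0 // => i _; exact: abs2_ge0.
have pow1 : 1 <= (2 : R) ^+ size s by rewrite exprn_ege1 // ler1n.
nra.
Qed.

Lemma normr_bilin_le (a b c e : R) : `|a * c + b * e| <= a ^+ 2 + b ^+ 2 + (c ^+ 2 + e ^+ 2).
Proof.
have := sqr_ge0 (a - c); have := sqr_ge0 (a + c); have := sqr_ge0 (b - e).
by have := sqr_ge0 (b + e); rewrite ler_norml !expr2 => *; apply/andP; split; nra.
Qed.

Lemma csummable_mulJ (T : choiceType) (x y : T -> C) :
  (sqnorm x < +oo)%E -> (sqnorm y < +oo)%E -> csummable (fun t => x t * conjc (y t)).
Proof.
move=> x_fin y_fin.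
have xy_fin : (esum setT (fun t => (abs2 (x t) + abs2 (y t))%:E) < +oo)%E.
  by rewrite esumD_EFin ?lte_add_pinfty // => t; exact: abs2_ge0.
split; apply: (rsummable_le _ xy_fin) => t; case: (x t) => a b; case: (y t) => c e /=.
  by rewrite mulrN opprK; exact: normr_bilin_le.
apply: le_trans (normr_bilin_le a b (- e) c) _.
by rewrite /abs2 /= sqrrN; lra.
Qed.

Lemma inner_sumr (T K : choiceType) (s : seq K) (x : T -> C) (y : K -> T -> C) :
  (sqnorm x < +oo)%E -> (forall k, sqnorm (y k) < +oo)%E ->
  inner x (fun t => \sum_(k <- s) y k t) = \sum_(k <- s) inner x (y k).
Proof.
move=> x_fin y_fin; rewrite /inner -csum_sum; last by move=> k; exact: csummable_mulJ.
by under eq_fun do rewrite rmorph_sum mulr_sumr.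
Qed.

Lemma l2_sum (T K : choiceType) (S : set T) (s : seq K) (y : K -> T -> C) :
  (forall k, l2 S (y k)) -> l2 S (fun t => \sum_(k <- s) y k t).
Proof.
move=> yl2; split=> [t St|].
  by rewrite big1 // => k _; rewrite (yl2 k).1.
apply: (@le_lt_trans _ _
  (esum setT (fun t => (2 ^+ size s * \sum_(k <- s) abs2 (y k t))%:E))).
  by apply: le_esum => t _; rewrite lee_fin abs2_sum_le.
have pow0 : 0 <= (2 : R) ^+ size s by rewrite exprn_ge0.
rewrite esumZ_EFin //; last by move=> t; rewrite sumr_ge0 // => k _; exact: abs2_ge0.
rewrite esum_sum_EFin; last by move=> k t; exact: abs2_ge0.
by rewrite lte_mul_pinfty ?lee_fin // lte_sum_pinfty // => k _; exact: (yl2 k).2.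
Qed.

End l2_inner.

Section multi_index.
Variable d : nat.
Local Notation M := {ffun 'I_d -> nat}.

Definition upd (s : M) (j : 'I_d) (n : nat) : M := [ffun i => if i == j then n else s i].

Lemma upd_eq (s : M) j n : upd s j n j = n.
Proof. by rewrite ffunE eqxx. Qed.

Lemma upd_neq (s : M) j n i : i != j -> upd s j n i = s i.
Proof. by rewrite ffunE => /negPf ->. Qed.

Lemma upd_upd (s : M) j n m : upd (upd s j n) j m = upd s j m.
Proof. by apply/ffunP => i; rewrite !ffunE; case: eqP. Qed.

Lemma upd_id (s : M) j : upd s j (s j) = s.
Proof. by apply/ffunP => i; rewrite !ffunE; case: eqP => // ->. Qed.

Lemma upd_inj (s : M) j : injective (upd s j).
Proof. by move=> n m /(congr1 (fun t : M => t j)); rewrite !upd_eq. Qed.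

Lemma big_ord_ltS (T : Type) (idx : T) (op : Monoid.com_law idx) (F : 'I_d -> T)
    (j : 'I_d) :
  \big[op/idx]_(i < d | (i < j.+1)%N) F i = op (F j) (\big[op/idx]_(i < d | (i < j)%N) F i).
Proof.
rewrite (bigD1 j) //=; congr (op _ _); apply: eq_bigl => i.
rewrite ltnS leq_eqVlt; case: (eqVneq i j) => [->|ij]; first by rewrite ltnn eqxx.
by rewrite (negbTE ij : (i : nat) == j = false) andbT.
Qed.

(* The partial tensor
     g_0(s_0) (x) ... (x) g_(j-1)(s_(j-1)) (x) delta_(s_j) (x) ... (x) delta_(s_(d-1));
   raising j from 0 to d integrates out one coordinate at a time. *)
Definition ptensor (K : comNzRingType) (g : 'I_d -> nat -> nat -> K) (j : nat) (s t : M) : K :=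
  \prod_(i < d) (if (i < j)%N then g i (s i) (t i) else (t i == s i)%:R).

Section ptensor_ring.
Variables (K : comNzRingType) (g : 'I_d -> nat -> nat -> K).

Lemma ptensor0 (s t : M) : ptensor g 0 s t = (t == s)%:R.
Proof.
rewrite /ptensor; case: (eqVneq t s) => [->|ts].
  by rewrite big1 // => i _; rewrite eqxx.
case: (pickP (fun i => t i != s i)) => [i tsi|ts_eq].
  by rewrite (bigD1 i) //= (negPf tsi) mul0r.
by case/eqP: ts; apply/ffunP => i; apply/eqP/negbFE/ts_eq.
Qed.

Lemma ptensorS (j : 'I_d) (s t : M) :
  ptensor g j.+1 s t = g j (s j) (t j) * ptensor g j (upd s j (t j)) t.
Proof.
rewrite /ptensor (bigD1 j) //= [X in _ = _ * X](bigD1 j) //= ltnSn ltnn upd_eq eqxx mul1r.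
congr (_ * _); apply: eq_bigr => i ij.
by rewrite ltnS leq_eqVlt (negbTE ij : (i : nat) == j = false) /= upd_neq.
Qed.

Lemma ptensor_out (j : 'I_d) (s t : M) : t j != s j -> ptensor g j s t = 0.
Proof. by move=> tsj; rewrite /ptensor (bigD1 j) //= ltnn (negPf tsj) mul0r. Qed.

Lemma ptensor_full (s t : M) : ptensor g d s t = \prod_(i < d) g i (s i) (t i).
Proof. by apply: eq_bigr => i _; rewrite ltn_ord. Qed.

End ptensor_ring.

Variable R : realType.

Lemma ptensor_ge0 (b : 'I_d -> nat -> R) j (s t : M) : (forall i n, 0 <= b i n) ->
  0 <= ptensor (fun i _ => b i) j s t.
Proof. by move=> b0; rewrite prodr_ge0 // => i _; case: ifP => _ //; rewrite ler0n. Qed.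

Lemma abs2_ptensor (g : 'I_d -> nat -> nat -> R[i]) j (s t : M) :
  abs2 (ptensor g j s t) = ptensor (fun i m n => abs2 (g i m n)) j s t.
Proof.
rewrite /ptensor abs2_prod; apply: eq_bigr => i _; case: ifP => _ //.
by case: eqP => _; rewrite ?abs21 ?abs20.
Qed.

Lemma esum_ptensor (b : 'I_d -> nat -> R) : (forall i n, 0 <= b i n) ->
  (forall i, (esum setT (fun n => (b i n)%:E) < +oo)%E) ->
  forall j, (j <= d)%N -> forall s : M,
  esum setT (fun t => (ptensor (fun i _ => b i) j s t)%:E) =
  (\prod_(i < d | (i < j)%N) fine (esum setT (fun n => (b i n)%:E)))%:E.
Proof.
move=> b0 b_fin; elim=> [_ s|j IH jd s].
  rewrite big_pred0 // (esum_supp1 (s := s)) ?ptensor0 ?eqxx // => t.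
    by rewrite lee_fin ptensor_ge0.
  by rewrite ptensor0 => /eqP/negPf ->.
pose j' := Ordinal jd; rewrite -[j]/(nat_of_ord j') big_ord_ltS.
set P := \prod_(i < d | (i < j')%N) _.
have P0 : 0 <= P.
  by rewrite prodr_ge0 // => i _; rewrite fine_ge0 // esum_ge0 // => n _; rewrite lee_fin.
rewrite (esum_fibers (fun t : M => t j')); last by move=> t; rewrite lee_fin ptensor_ge0.
transitivity (esum setT (fun n => (P * b j' n)%:E)).
  apply: eq_esum => n _.
  rewrite (eq_esum (b := fun t => (b j' n * ptensor (fun i _ => b i) j' (upd s j' n) t)%:E)).
    rewrite esumZ_EFin //; last by move=> t; rewrite ptensor_ge0.
    by rewrite (IH (ltnW jd)) -/P -EFinM mulrC.
  move=> t _; case: eqP => [<-|tn]; first by rewrite ptensorS.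
  by rewrite ptensor_out ?mulr0 // upd_eq; apply/eqP.
rewrite esumZ_EFin // -(fineK (esum_EFin_fin_num (b0 j') (b_fin j'))) -EFinM.
by rewrite mulrC.
Qed.

Lemma esum_tensor (b : 'I_d -> nat -> R) : (forall i n, 0 <= b i n) ->
  (forall i, (esum setT (fun n => (b i n)%:E) < +oo)%E) ->
  esum setT (fun t : M => (\prod_(i < d) b i (t i))%:E) =
  (\prod_(i < d) fine (esum setT (fun n => (b i n)%:E)))%:E.
Proof.
move=> b0 b_fin; have := esum_ptensor b0 b_fin (leqnn d) [ffun=> 0%N].
under eq_esum do rewrite ptensor_full.
by rewrite (eq_bigl xpredT) // => i; rewrite ltn_ord.
Qed.

Lemma esum_lines (a : M -> \bar R) (j : 'I_d) : (forall s, 0 <= a s)%E ->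
  esum setT a =
  esum setT (fun s : M => if s j == 0%N then esum setT (fun n => a (upd s j n)) else 0%E).
Proof.
move=> a0; rewrite (esum_fibers (fun s => upd s j 0)) //; apply: eq_esum => s _.
have [sj0|sj_neq0] := eqVneq (s j) 0%N.
  rewrite (esum_range (e := upd s j)).
  - by apply: eq_esum => n _ /=; rewrite upd_upd -sj0 upd_id eqxx.
  - exact: upd_inj.
  - by move=> t; case: ifP.
  move=> t t_out; case: eqP => // ts; exfalso; apply: t_out.
  by exists (t j) => //; rewrite -ts upd_upd upd_id.
rewrite esum1 // => t _; case: eqP => // ts.
by move: sj_neq0; rewrite -ts upd_eq eqxx.
Qed.

End multi_index.

Section tensor_bessel.
Variables (R : realType) (d : nat) (I : 'I_d -> set nat).
Variables (g : 'I_d -> nat -> nat -> R[i]) (B : 'I_d -> R).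
Hypothesis g_l2 : forall i m, l2 (I i) (g i m).
Hypothesis B_ge0 : forall i, 0 <= B i.
Hypothesis g_bessel : forall i (x : nat -> R[i]), l2 (I i) x ->
  (esum setT (fun n => (abs2 (inner x (g i n)))%:E) <= (B i)%:E * sqnorm x)%E.
Local Notation M := {ffun 'I_d -> nat}.

Lemma tensorE (m : M) : tensor (fun i => g i (m i)) = ptensor g d m.
Proof. by apply/funext => t; rewrite ptensor_full. Qed.

Lemma sqnorm_ptensor_fin j (s : M) : (j <= d)%N -> (sqnorm (ptensor g j s) < +oo)%E.
Proof.
move=> jd; rewrite /sqnorm; under eq_esum do rewrite abs2_ptensor.
have -> : ptensor (fun i m n => abs2 (g i m n)) j s =
          ptensor (fun i _ n => abs2 (g i (s i) n)) j s.
  by apply/funext => t; apply: eq_bigr => i _; case: ifP.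
rewrite esum_ptensor ?ltry // => [i n|i]; first exact: abs2_ge0.
exact: (g_l2 i (s i)).2.
Qed.

Variable x : M -> R[i].
Hypothesis x_l2 : l2 (prodset I) x.

Lemma inner_ptensor0 (s : M) : inner x (ptensor g 0 s) = x s.
Proof.
rewrite /inner (csum_supp1 (s := s)) => [|t ts]; rewrite ptensor0.
  by rewrite eqxx rmorph1 mulr1.
by move/eqP/negPf: ts => ->; rewrite rmorph0 mulr0.
Qed.

Lemma inner_ptensorS (j : 'I_d) (s : M) :
  inner x (ptensor g j.+1 s) = inner (fun n => inner x (ptensor g j (upd s j n))) (g j (s j)).
Proof.
rewrite {1}/inner (csum_fibers (fun t : M => t j)); last first.
  by apply: csummable_mulJ; [exact: x_l2.2 | exact: sqnorm_ptensor_fin].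
congr csum; apply/funext => n.
transitivity (csum (fun t => conjc (g j (s j) n) * (x t * conjc (ptensor g j (upd s j n) t)))).
  congr csum; apply/funext => t; case: eqP => [<-|tn]; first by rewrite ptensorS rmorphM; ring.
  by rewrite ptensor_out ?rmorph0 ?mulr0 // upd_eq; apply/eqP.
rewrite csumZ 1?mulrC //; apply: csummable_mulJ; first exact: x_l2.2.
exact/sqnorm_ptensor_fin/ltnW.
Qed.

Lemma inner_ptensor_out (j : 'I_d) (s : M) n :
  ~ I j n -> inner x (ptensor g j (upd s j n)) = 0.
Proof.
move=> nIj; apply: csum_eq0 => t; have [tjn|tjn] := eqVneq (t j) n.
  by rewrite x_l2.1 ?mul0r // => /(_ j); rewrite tjn.
by rewrite ptensor_out ?rmorph0 ?mulr0 // upd_eq.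
Qed.

Lemma ptensor_bessel_step (j : 'I_d) :
  (esum setT (fun s => (abs2 (inner x (ptensor g j s)))%:E) < +oo)%E ->
  (esum setT (fun s => (abs2 (inner x (ptensor g j.+1 s)))%:E) <=
   (B j)%:E * esum setT (fun s => (abs2 (inner x (ptensor g j s)))%:E))%E.
Proof.
set a := fun s => (abs2 (inner x (ptensor g j s)))%:E => a_fin.
have a0 s : (0 <= a s)%E by rewrite lee_fin abs2_ge0.
pose W s n := inner x (ptensor g j (upd s j n)).
have W_l2 s : l2 (I j) (W s).
  split=> [n nIj|]; first exact: inner_ptensor_out.
  apply: le_lt_trans a_fin; exact: (le_esum_comp (@upd_inj _ s j) a0).
have innerS s n : inner x (ptensor g j.+1 (upd s j n)) = inner (W s) (g j n).
  rewrite (inner_ptensorS j (upd s j n)) (upd_eq s j n); congr (inner _ (g j n)).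
  by apply/funext => m; rewrite upd_upd.
rewrite (esum_lines j); last by move=> s; rewrite lee_fin abs2_ge0.
rewrite [X in (_ <= _ * X)%E](esum_lines j) // -esumZl //; last first.
  by move=> s; case: ifP => // _; apply: esum_ge0.
apply: le_esum => s _; case: ifP => _; last by rewrite mule0.
under eq_esum do rewrite innerS.
exact: g_bessel (W_l2 s).
Qed.

Lemma ptensor_bessel j : (j <= d)%N ->
  (esum setT (fun s => (abs2 (inner x (ptensor g j s)))%:E) <=
   (\prod_(i < d | (i < j)%N) B i)%:E * sqnorm x)%E.
Proof.
elim: j => [_|j IH jd].
  by rewrite big_pred0 // mul1e; under eq_esum do rewrite inner_ptensor0.
pose j' := Ordinal jd; rewrite -[j]/(nat_of_ord j') big_ord_ltS EFinM -muleA.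
have {}IH := IH (ltnW jd).
apply: le_trans (ptensor_bessel_step _) _.
  apply: le_lt_trans IH _; rewrite lte_mul_pinfty ?lee_fin ?prodr_ge0 //.
  exact: x_l2.2.
by rewrite lee_wpmul2l // lee_fin.
Qed.

Lemma tensor_bessel :
  (esum setT (fun m : M => (abs2 (inner x (tensor (fun i => g i (m i)))))%:E) <=
   (\prod_(i < d) B i)%:E * sqnorm x)%E.
Proof.
under eq_esum do rewrite tensorE.
by rewrite -(eq_bigl _ _ (fun i : 'I_d => ltn_ord i)); exact: ptensor_bessel.
Qed.

End tensor_bessel.

Section spanning_rows.
Variables (K : fieldType) (r : nat) (P : 'rV[K]_r -> Prop).
Hypothesis P_sep : forall c : 'cV[K]_r, (forall v, P v -> v *m c = 0) -> c = 0.

Lemma exists_row_notin L (A : 'M[K]_(L, r)) :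
  (\rank A < r)%N -> exists2 v, P v & ~~ (v <= A)%MS.
Proof.
move=> rkA; apply: contrapT => noP; move: rkA; apply/negP; rewrite -leqNgt.
suff : kermx A^T == 0 by rewrite -mxrank_eq0 mxrank_ker mxrank_tr subn_eq0.
apply/eqP/row_matrixP => i; rewrite row0; set w := row i _.
have Aw : A *m w^T = 0.
  by rewrite -[A in A *m _]trmxK -trmx_mul -row_mul mulmx_ker row0 trmx0.
apply/eqP; rewrite -trmx_eq0; apply/eqP/P_sep => v Pv.
have /submxP[D ->] : (v <= A)%MS by apply/negPn/negP => vA; apply: noP; exists v.
by rewrite -mulmxA Aw mulmx0.
Qed.

Lemma exists_rows_rank_ge n : (n <= r)%N ->
  exists L (A : 'M[K]_(L, r)), (forall l, P (row l A)) /\ (n <= \rank A)%N.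
Proof.
elim: n => [_|n IH nr]; first by exists 0%N, 0; split => // -[].
have [L [A [PA nA]]] := IH (ltnW nr).
have [nA'|An] := leqP n.+1 (\rank A); first by exists L, A.
have rkA : \rank A = n by apply/eqP; rewrite eqn_leq nA andbT -ltnS.
have [|v Pv vA] := @exists_row_notin L A; first by rewrite rkA.
exists (L + 1)%N, (col_mx A v); split.
  move=> l; case: (splitP l) => i li.
    by rewrite (_ : l = lshift 1 i) ?rowKu //; apply: val_inj.
  rewrite (_ : l = rshift L i) ?rowKd; last exact: val_inj.
  by rewrite (_ : row i v = v) // (ord1 i); apply/rowP => k; rewrite !mxE.
rewrite -rkA; apply: rank_ltmx; rewrite ltmxE col_mx_sub (negbTE vA) andbF andbT.
by rewrite -addsmxE addsmxSl.
Qed.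

Lemma exists_rows_full :
  exists L (A : 'M[K]_(L, r)), (forall l, P (row l A)) /\ row_full A.
Proof.
have [L [A [PA rA]]] := exists_rows_rank_ge (leqnn r).
by exists L, A; split; rewrite // /row_full eqn_leq rank_leq_col.
Qed.

End spanning_rows.

Section free_families.
Variables (K : comNzRingType) (r : nat).

Definition free_family (A : Type) (g : 'I_r -> A -> K) :=
  forall c : 'I_r -> K, (forall a, \sum_(k < r) c k * g k a = 0) -> forall k, c k = 0.

Lemma eq_free_family (A : Type) (g h : 'I_r -> A -> K) :
  (forall k a, g k a = h k a) -> free_family g -> free_family h.
Proof. by move=> gh g_free c ch0; apply: g_free => a; under eq_bigr do rewrite gh. Qed.

Lemma free_family_comp (A X : Type) (g : 'I_r -> A -> K) (alpha : X -> A) :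
  (forall a, exists x, alpha x = a) -> free_family g -> free_family (fun k x => g k (alpha x)).
Proof.
move=> alpha_onto g_free c cg0; apply: g_free => a.
by have [x <-] := alpha_onto a; exact: cg0.
Qed.

Lemma free_family_mul (A X : Type) (g : 'I_r -> A -> K) (h : 'I_r -> X -> K) (alpha : X -> A) :
  (forall a x, exists2 y, alpha y = a & forall k, h k y = h k x) ->
  free_family g -> free_family h -> free_family (fun k x => g k (alpha x) * h k x).
Proof.
move=> alpha_slice g_free h_free c cgh0.
have ch0 k x : c k * h k x = 0.
  apply: (g_free (fun k => c k * h k x)) => a; have [y <- hy] := alpha_slice a x.
  by rewrite -[RHS](cgh0 y); apply: eq_bigr => k' _; rewrite hy; ring.
move=> k0; have := h_free (fun k => if k == k0 then c k0 else 0) _ k0.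
rewrite eqxx; apply=> x.
by rewrite (bigD1 k0) //= eqxx big1 ?addr0 // => k /negPf ->; rewrite mul0r.
Qed.

End free_families.

Section product_sequence.
Variables (R : realType) (d r : nat) (I : 'I_d -> set nat).
Variable f : 'I_d -> 'I_r -> nat -> nat -> R[i].
Hypothesis f_l2 : forall j k n, l2 (I j) (f j k n).
Local Notation M := {ffun 'I_d -> nat}.
Local Notation C := R[i].

Lemma tensor_l2 k (m : M) : l2 (prodset I) (tensor (fun i => f i k (m i))).
Proof.
split=> [t tI|]; last first.
  rewrite (tensorE (fun i => f i k)).
  exact: (sqnorm_ptensor_fin (fun i => f_l2 i k) m (leqnn d)).
have [i tIi] : exists i, ~ I i (t i) by apply/existsNP => tI'; apply: tI.
by rewrite /tensor (bigD1 i) //= (f_l2 i k (m i)).1 ?mul0r.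
Qed.

Lemma Fseq_l2 (m : M) : l2 (prodset I) (Fseq f m).
Proof. by apply: l2_sum => k; exact: tensor_l2. Qed.

Definition tensor_off (j : 'I_d) (q p : M) (k : 'I_r) : C :=
  \prod_(i < d | i != j) f i k (q i) (p i).

Lemma tensor_off_updl j (q p : M) n k : tensor_off j (upd q j n) p k = tensor_off j q p k.
Proof. by apply: eq_bigr => i ij; rewrite upd_neq. Qed.

Lemma tensor_off_updr j (q p : M) n k : tensor_off j q (upd p j n) k = tensor_off j q p k.
Proof. by apply: eq_bigr => i ij; rewrite upd_neq. Qed.

Lemma tensor_upd j (m p : M) n k :
  tensor (fun i => f i k (m i)) (upd p j n) = f j k (m j) n * tensor_off j m p k.
Proof.
by rewrite /tensor (bigD1 j) //= upd_eq; congr (_ * _); apply: eq_bigr => i ij; rewrite upd_neq.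
Qed.

Lemma free_tensor_off j : (1 < d)%N ->
  (forall i, free_family (fun k (np : nat * nat) => f i k np.1 np.2)) ->
  free_family (fun k (qp : M * M) => tensor_off j qp.1 qp.2 k).
Proof.
move=> d_gt1 f_free.
suff free_prod S : uniq S -> S != [::] ->
    free_family (fun k (qp : M * M) => \prod_(i <- S) f i k (qp.1 i) (qp.2 i)).
  have [i ij] : exists i : 'I_d, i != j.
    have [<-|] := eqVneq (Ordinal d_gt1) j; last by exists (Ordinal d_gt1).
    by exists (Ordinal (ltnW d_gt1)); apply/eqP => /(congr1 val).
  apply: (eq_free_family _ (free_prod [seq i <- index_enum 'I_d | i != j] _ _)).
  - by move=> k qp; rewrite big_filter.
  - by rewrite filter_uniq ?index_enum_uniq.
  - by rewrite -has_filter; apply/hasP; exists i; rewrite ?mem_index_enum.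
elim: S => // i0 [|i1 S] IH uS _.
  apply: (eq_free_family _ (free_family_comp
    (alpha := fun qp : M * M => (qp.1 i0, qp.2 i0)) _ (f_free i0))).
    by move=> k qp; rewrite big_seq1.
  by move=> [n t]; exists ([ffun=> n], [ffun=> t]); rewrite /= !ffunE.
move: uS; rewrite [uniq _]/= => /andP[i0S uS].
apply: (eq_free_family _ (free_family_mul
  (alpha := fun qp : M * M => (qp.1 i0, qp.2 i0)) _ (f_free i0) (IH uS isT))).
  by move=> k qp; rewrite [RHS]big_cons.
move=> [n t] [q p]; exists (upd q i0 n, upd p i0 t); rewrite /= ?upd_eq // => k.
apply: eq_big_seq => i iS; have i0i : i != i0 by apply: contraNneq i0S => <-.
by rewrite !upd_neq.
Qed.

End product_sequence.

Section line_embedding.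
Variables (R : realType) (d : nat) (j : 'I_d) (p : {ffun 'I_d -> nat}).
Local Notation M := {ffun 'I_d -> nat}.

Definition line_embed (x : nat -> R[i]) : M -> R[i] :=
  fun t => if t == upd p j (t j) then x (t j) else 0.

Lemma line_embed_upd x n : line_embed x (upd p j n) = x n.
Proof. by rewrite /line_embed upd_eq eqxx. Qed.

Lemma line_embed_out x t : ~ range (upd p j) t -> line_embed x t = 0.
Proof. by move=> t_out; rewrite /line_embed; case: eqP => // tE; case: t_out; exists (t j). Qed.

Lemma sqnorm_line_embed x : sqnorm (line_embed x) = sqnorm x.
Proof.
rewrite /sqnorm (esum_range (e := upd p j)) => [|||t /line_embed_out ->].
- by apply: eq_esum => n _ /=; rewrite line_embed_upd.
- exact: upd_inj.
- by move=> t; rewrite lee_fin abs2_ge0.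
- by rewrite abs20.
Qed.

Lemma l2_line_embed (I : 'I_d -> set nat) x :
  (forall i, I i (p i)) -> l2 (I j) x -> l2 (prodset I) (line_embed x).
Proof.
move=> pI [x_out x_fin]; split; last by rewrite sqnorm_line_embed.
move=> t tI; rewrite /line_embed; case: eqP => // tE; apply: x_out => tjI; apply: tI => i.
by have [->|ij] := eqVneq i j; rewrite // tE upd_neq.
Qed.

End line_embedding.

Section factor_sequences.
Variables (R : realType) (d r : nat) (I : 'I_d -> set nat).
Variable f : 'I_d -> 'I_r -> nat -> nat -> R[i].
Hypothesis f_l2 : forall j k n, l2 (I j) (f j k n).
Local Notation M := {ffun 'I_d -> nat}.
Local Notation C := R[i].

Lemma inner_line_embed j (p : M) x (m : M) : l2 (I j) x ->
  inner (line_embed j p x) (Fseq f m) =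
  \sum_(k < r) conjc (tensor_off f j m p k) * inner x (f j k (m j)).
Proof.
move=> x_l2; rewrite /inner (csum_range (e := upd p j)) => [||t /line_embed_out ->]; last 2 first.
- exact: upd_inj.
- by rewrite mul0r.
have summable_k k : csummable (fun n => x n * conjc (f j k (m j) n)).
  exact: csummable_mulJ x_l2.2 (f_l2 j k (m j)).2.
transitivity (\sum_(k < r) csum (fun n =>
    conjc (tensor_off f j m p k) * (x n * conjc (f j k (m j) n)))).
  rewrite -csum_sum => [|k]; last exact: csummableZ.
  congr csum; apply/funext => n /=.
  rewrite line_embed_upd /Fseq rmorph_sum mulr_sumr; apply: eq_bigr => k _.
  by rewrite tensor_upd rmorphM; ring.
by apply: eq_bigr => k _; rewrite csumZ.
Qed.

Lemma tensor_off_separating j (p0 : M) : (forall i, I i (p0 i)) ->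
  free_family (fun k (qp : M * M) => tensor_off f j qp.1 qp.2 k) ->
  forall c : 'cV[C]_r,
    (forall v, (exists q p : M, (forall i, I i (p i)) /\ v = \row_k tensor_off f j q p k) ->
       v *m c = 0) -> c = 0.
Proof.
move=> p0I off_free c c_ann; apply/matrixP => k z; rewrite (ord1 z) mxE.
apply: (off_free (fun k => c k 0)) => -[q p] /=.
case: (pselect (forall i, i != j -> I i (p i))) => [pI|]; last first.
  move=> /existsNP[i /not_implyP[ij piI]]; apply: big1 => k' _.
  by rewrite /tensor_off (bigD1 i) //= (f_l2 i k' (q i)).1 // mul0r mulr0.
pose p' := upd p j (p0 j).
have p'I i : I i (p' i).
  by rewrite /p'; have [->|ij] := eqVneq i j; [rewrite upd_eq | rewrite upd_neq //; exact: pI].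
have row_ann : (\row_k tensor_off f j q p' k) *m c = 0 by apply: c_ann; exists q, p'; split.
move/matrixP/(_ 0 0): row_ann; rewrite !mxE => row_ann.
apply: etrans row_ann; apply: eq_bigr => k' _.
by rewrite !mxE tensor_off_updr mulrC.
Qed.

Lemma support_point : (0 < r)%N ->
  (forall i, free_family (fun k (np : nat * nat) => f i k np.1 np.2)) ->
  exists p : M, forall i, I i (p i).
Proof.
move=> r_gt0 f_free.
suff /choice[p pI] : forall i, exists n, I i n by exists [ffun i => p i] => i; rewrite ffunE.
move=> i; apply: contrapT => Ii_empty.
have one0 : (1 : C) = 0.
  apply: (f_free i (fun _ => 1) _ (Ordinal r_gt0)) => -[n t].
  rewrite big1 // => k _; rewrite mul1r (f_l2 i k n).1 // => tI.
  by apply: Ii_empty; exists t.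
by move/eqP: one0; rewrite oner_eq0.
Qed.

End factor_sequences.

Section bessel_sequences.
Variable R : realType.
Local Notation C := R[i].

Lemma sum_mul_le_mul_sum (K : Type) (s : seq K) (a b : K -> R) :
  (forall k, 0 <= a k) -> (forall k, 0 <= b k) ->
  \sum_(k <- s) a k * b k <= (\sum_(k <- s) a k) * (\sum_(k <- s) b k).
Proof.
move=> a0 b0; elim: s => [|k s IH]; first by rewrite !big_nil mul0r.
rewrite !big_cons.
have sa0 : 0 <= \sum_(k <- s) a k by rewrite sumr_ge0.
have sb0 : 0 <= \sum_(k <- s) b k by rewrite sumr_ge0.
by have := a0 k; have := b0 k; nra.
Qed.

Lemma esum_abs2_sum_le (K T : choiceType) (s : seq K) (D : K -> C) (b : K -> T -> C)
    (B : K -> R) (y : \bar R) :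
  (forall k, 0 <= B k) -> (0 <= y)%E ->
  (forall k, esum setT (fun t => (abs2 (b k t))%:E) <= (B k)%:E * y)%E ->
  (esum setT (fun t => (abs2 (\sum_(k <- s) D k * b k t))%:E) <=
   (2 ^+ size s * \sum_(k <- s) abs2 (D k) * B k)%:E * y)%E.
Proof.
move=> B0 y0 b_le.
have pow0 : 0 <= (2 : R) ^+ size s by rewrite exprn_ge0.
apply: (@le_trans _ _
  (esum setT (fun t => (2 ^+ size s * \sum_(k <- s) abs2 (D k) * abs2 (b k t))%:E))).
  apply: le_esum => t _; rewrite lee_fin; apply: le_trans (abs2_sum_le _ _) _.
  by under eq_bigr do rewrite abs2M.
rewrite esumZ_EFin // => [|t]; last by rewrite sumr_ge0 // => k _; rewrite mulr_ge0 ?abs2_ge0.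
rewrite esum_sum_EFin => [|k t]; last by rewrite mulr_ge0 ?abs2_ge0.
rewrite EFinM -muleA lee_wpmul2l ?lee_fin // -sumEFin ge0_sume_distrl => [|k _]; last first.
  by rewrite lee_fin mulr_ge0 ?abs2_ge0.
apply: lee_sum => k _; rewrite esumZ_EFin ?abs2_ge0 // => [|t]; last exact: abs2_ge0.
by rewrite EFinM -muleA lee_wpmul2l ?lee_fin ?abs2_ge0.
Qed.

Lemma besselP (T N : choiceType) (S : set T) (g : N -> T -> C) :
  (forall n, l2 S (g n)) ->
  (exists B, 0 <= B /\ forall x, l2 S x ->
     (esum setT (fun n => (abs2 (inner x (g n)))%:E) <= B%:E * sqnorm x)%E) ->
  bessel S g.
Proof.
move=> g_l2 [B [B0 g_le]]; split=> //; exists (B + 1); split=> [|x x_l2].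
  by rewrite ltr_wpDl.
apply: le_trans (g_le x x_l2) _; rewrite lee_wpmul2r ?lee_fin ?lerDl //.
by apply: esum_ge0 => t _; rewrite lee_fin abs2_ge0.
Qed.

Lemma bessel_fin (T N : choiceType) (S : set T) (g : N -> T -> C) x :
  bessel S g -> l2 S x -> (esum setT (fun n => (abs2 (inner x (g n)))%:E) < +oo)%E.
Proof.
move=> [_ [B [B0 g_le]]] x_l2; apply: le_lt_trans (g_le x x_l2) _.
by rewrite lte_mul_pinfty ?lee_fin ?ltW //; exact: x_l2.2.
Qed.

Lemma bessel_pair (K : finType) (T N : choiceType) (S : set T) (g : K -> N -> T -> C) :
  (forall k, bessel S (g k)) -> bessel S (fun kn : K * N => g kn.1 kn.2).
Proof.
move=> g_bessel.
have /choice[B B_spec] : forall k, exists B, 0 < B /\ forall x, l2 S x ->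
    (esum setT (fun n => (abs2 (inner x (g k n)))%:E) <= B%:E * sqnorm x)%E.
  by move=> k; have [_ ?] := g_bessel k.
apply: besselP => [[k n]|]; first exact: (g_bessel k).1.
exists (\sum_(k : K) B k); split=> [|x x_l2].
  by rewrite sumr_ge0 // => k _; rewrite ltW // (B_spec k).1.
rewrite esum_pair => [|kn]; last by rewrite lee_fin abs2_ge0.
rewrite -sumEFin ge0_sume_distrl => [|k _]; last by rewrite lee_fin ltW // (B_spec k).1.
by apply: lee_sum => k _; exact: (B_spec k).2.
Qed.

Definition delta (t0 : nat) : nat -> C := fun t => (t == t0)%:R.

Lemma sqnorm_delta t0 : sqnorm (delta t0) = 1%E.
Proof.
rewrite /sqnorm (esum_supp1 (s := t0)) => [|t|t tt0]; first by rewrite /delta eqxx abs21.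
  by rewrite lee_fin abs2_ge0.
by rewrite /delta; move/eqP/negPf: tt0 => ->; rewrite abs20.
Qed.

Lemma l2_delta (S : set nat) t0 : S t0 -> l2 S (delta t0).
Proof.
move=> St0; split=> [t St|]; last by rewrite sqnorm_delta ltry.
by rewrite /delta; case: eqP => // tt0; rewrite tt0 in St.
Qed.

Lemma inner_delta t0 (g : nat -> C) : inner (delta t0) g = conjc (g t0).
Proof.
rewrite /inner (csum_supp1 (s := t0)) => [|t tt0]; first by rewrite /delta eqxx mul1r.
by rewrite /delta; move/eqP/negPf: tt0 => ->; rewrite mul0r.
Qed.

Lemma bessel_coord_fin (S : set nat) (N : choiceType) (g : N -> nat -> C) t0 :
  bessel S g -> S t0 -> (esum setT (fun n => (abs2 (g n t0))%:E) < +oo)%E.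
Proof.
move=> g_bessel St0; have := bessel_fin g_bessel (l2_delta St0).
by under eq_esum do rewrite inner_delta abs2J.
Qed.

End bessel_sequences.

Section tensor_frames.
Variables (R : realType) (d r : nat) (I : 'I_d -> set nat).
Variable f : 'I_d -> 'I_r -> nat -> nat -> R[i].
Hypothesis f_l2 : forall j k n, l2 (I j) (f j k n).
Local Notation M := {ffun 'I_d -> nat}.
Local Notation C := R[i].

Lemma bessel_Fseq : (forall j k, bessel (I j) (f j k)) -> bessel (prodset I) (Fseq f).
Proof.
move=> f_bessel.
have /choice[B B_spec] : forall jk : 'I_d * 'I_r, exists b, 0 < b /\ forall x, l2 (I jk.1) x ->
    (esum setT (fun n => (abs2 (inner x (f jk.1 jk.2 n)))%:E) <= b%:E * sqnorm x)%E.
  by move=> [j k]; have [_ ?] := f_bessel j k.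
have B0 i k : 0 <= B (i, k) by rewrite ltW // (B_spec (i, k)).1.
apply: besselP => [m|]; first exact: Fseq_l2.
exists (2 ^+ size (index_enum 'I_r) * \sum_(k < r) abs2 1 * \prod_(i < d) B (i, k)).
split=> [|x x_l2].
  by rewrite mulr_ge0 ?exprn_ge0 ?sumr_ge0 // => k _; rewrite mulr_ge0 ?abs2_ge0 ?prodr_ge0.
have tensor_fin k (m : M) : (sqnorm (tensor (fun i => f i k (m i))) < +oo)%E.
  by case: (tensor_l2 f_l2 k m).
have inner_Fseq (m : M) :
    inner x (Fseq f m) = \sum_(k < r) 1 * inner x (tensor (fun i => f i k (m i))).
  by rewrite /Fseq /= inner_sumr //; [under eq_bigr do rewrite mul1r | exact: x_l2.2].
under eq_esum do rewrite inner_Fseq.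
apply: esum_abs2_sum_le => [k||k]; first by rewrite prodr_ge0.
  by apply: esum_ge0 => t _; rewrite lee_fin abs2_ge0.
exact: (tensor_bessel (fun i => f_l2 i k) (fun i => B0 i k) (fun i => (B_spec (i, k)).2) x_l2).
Qed.

Lemma bessel_line_embed (B : R) j (p q : M) x :
  (forall y, l2 (prodset I) y ->
     (esum setT (fun m => (abs2 (inner y (Fseq f m)))%:E) <= B%:E * sqnorm y)%E) ->
  (forall i, I i (p i)) -> l2 (I j) x ->
  (esum setT (fun n => (abs2 (inner (line_embed j p x) (Fseq f (upd q j n))))%:E)
     <= B%:E * sqnorm x)%E.
Proof.
move=> F_le pI x_l2; rewrite -(sqnorm_line_embed j p x).
apply: le_trans (F_le _ (l2_line_embed pI x_l2)).
apply: (le_esum_comp (e := upd q j) (a := fun m => (abs2 (inner _ (Fseq f m)))%:E)).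
  exact: upd_inj.
by move=> m; rewrite lee_fin abs2_ge0.
Qed.

Lemma inner_comb_rows L j k0 (A : 'M[C]_(L, r)) (D : 'rV[C]_L) (qp : 'I_L -> M * M) x n :
  l2 (I j) x -> \row_k ((k == k0)%:R) = D *m A ->
  (forall l, row l A = \row_k tensor_off f j (qp l).1 (qp l).2 k) ->
  conjc (inner x (f j k0 n)) =
  \sum_(l < L) D 0 l * conjc (inner (line_embed j (qp l).2 x) (Fseq f (upd (qp l).1 j n))).
Proof.
move=> x_l2 DA A_rows.
have A_entry l k : A l k = tensor_off f j (qp l).1 (qp l).2 k.
  by have := congr1 (fun v : 'rV[C]_r => v 0 k) (A_rows l); rewrite !mxE.
transitivity (\sum_(k < r) (k == k0)%:R * conjc (inner x (f j k n))).
  by rewrite (bigD1 k0) //= eqxx mul1r big1 ?addr0 // => k /negPf ->; rewrite mul0r.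
have DA_entry k : (k == k0)%:R = \sum_(l < L) D 0 l * A l k.
  by have := congr1 (fun v : 'rV[C]_r => v 0 k) DA; rewrite !mxE.
under eq_bigr do rewrite DA_entry mulr_suml.
rewrite exchange_big; apply: eq_bigr => l _.
rewrite (inner_line_embed f_l2) // rmorph_sum mulr_sumr; apply: eq_bigr => k _.
by rewrite tensor_off_updl upd_eq rmorphM /= conjcK A_entry; ring.
Qed.

Hypothesis d_gt1 : (1 < d)%N.
Hypothesis r_gt0 : (0 < r)%N.
Hypothesis f_free : forall j, free_family (fun k (np : nat * nat) => f j k np.1 np.2).

Lemma bessel_factor : bessel (prodset I) (Fseq f) -> forall j k, bessel (I j) (f j k).
Proof.
move=> [_ [BF [BF0 F_le]]] j k0.
have [p0 p0I] := support_point f_l2 r_gt0 f_free.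
have [L [A [A_rows A_full]]] :=
  exists_rows_full (tensor_off_separating f_l2 p0I (free_tensor_off (j := j) d_gt1 f_free)).
have /submxP[D DA] := submx_full (\row_k ((k == k0)%:R : C)) A_full.
have /choice[qp qp_spec] : forall l, exists qp : M * M,
    (forall i, I i (qp.2 i)) /\ row l A = \row_k tensor_off f j qp.1 qp.2 k.
  by move=> l; have [q [p ?]] := A_rows l; exists (q, p).
apply: besselP => [n|]; first exact: f_l2.
exists (2 ^+ size (index_enum 'I_L) * \sum_(l < L) abs2 (D 0 l) * BF); split=> [|x x_l2].
  by rewrite mulr_ge0 ?exprn_ge0 ?sumr_ge0 // => l _; rewrite mulr_ge0 ?abs2_ge0 ?ltW.
under eq_esum do rewrite -abs2J (inner_comb_rows _ x_l2 DA (fun l => (qp_spec l).2)).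
apply: esum_abs2_sum_le => [l||l]; first exact: ltW.
  by apply: esum_ge0 => t _; rewrite lee_fin abs2_ge0.
under eq_esum do rewrite abs2J.
exact: bessel_line_embed F_le (qp_spec l).1 x_l2.
Qed.

Lemma esum_inner_line_embed_le j (p : M) x :
  (forall i, I i (p i)) -> l2 (I j) x ->
  (forall i k, (esum setT (fun n => (abs2 (f i k n (p i)))%:E) < +oo)%E) ->
  (forall k, (esum setT (fun n => (abs2 (inner x (f j k n)))%:E) < +oo)%E) ->
  (esum setT (fun m => (abs2 (inner (line_embed j p x) (Fseq f m)))%:E) <=
   (2 ^+ size (index_enum 'I_r) * \sum_(k < r)
      fine (esum setT (fun n => (abs2 (inner x (f j k n)))%:E)) *
      \prod_(i < d | i != j) fine (esum setT (fun n => (abs2 (f i k n (p i)))%:E)))%:E)%E.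
Proof.
move=> pI x_l2 f_fin xf_fin.
pose b k i n := if i == j then abs2 (inner x (f j k n)) else abs2 (f i k n (p i)).
have b0 k i n : 0 <= b k i n by rewrite /b; case: ifP => _; exact: abs2_ge0.
have b_fin k i : (esum setT (fun n => (b k i n)%:E) < +oo)%E.
  by rewrite /b; case: eqVneq => _; [exact: xf_fin | exact: f_fin].
have pow0 : 0 <= (2 : R) ^+ size (index_enum 'I_r) by rewrite exprn_ge0.
apply: (@le_trans _ _ (esum setT (fun m : M =>
  (2 ^+ size (index_enum 'I_r) * \sum_(k < r) \prod_(i < d) b k i (m i))%:E))).
  apply: le_esum => m _; rewrite lee_fin (inner_line_embed f_l2) //.
  apply: le_trans (abs2_sum_le _ _) _; rewrite ler_wpM2l // le_eqVlt; apply/orP; left.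
  apply/eqP/eq_bigr => k _; rewrite abs2M abs2J (bigD1 j) //= /b eqxx mulrC abs2_prod.
  by congr (_ * _); apply: eq_bigr => i ij; rewrite (negbTE ij).
rewrite esumZ_EFin // => [|m]; last by rewrite sumr_ge0 // => k _; rewrite prodr_ge0.
rewrite esum_sum_EFin => [|k m]; last by rewrite prodr_ge0.
under eq_bigr do rewrite (esum_tensor (b0 _) (b_fin _)).
rewrite sumEFin -EFinM lee_fin ler_wpM2l // le_eqVlt; apply/orP; left.
apply/eqP/eq_bigr => k _; rewrite (bigD1 j) //= /b eqxx; congr (_ * _).
by apply: eq_bigr => i ij; rewrite (negbTE ij).
Qed.

Lemma frame_factor : frame (prodset I) (Fseq f) ->
  forall j, frame (I j) (fun kn : 'I_r * nat => f j kn.1 kn.2).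
Proof.
move=> [F_bessel [A [A0 F_lower]]] j; have f_bessel := bessel_factor F_bessel.
split; first exact: bessel_pair.
have [p pI] := support_point f_l2 r_gt0 f_free.
have f_fin i k := bessel_coord_fin (f_bessel i k) (pI i).
pose Dk k := \prod_(i < d | i != j) fine (esum setT (fun n => (abs2 (f i k n (p i)))%:E)).
have Dk0 k : 0 <= Dk k.
  by rewrite prodr_ge0 // => i _; rewrite fine_ge0 // esum_ge0 // => n _; rewrite lee_fin abs2_ge0.
pose Q := 2 ^+ size (index_enum 'I_r) * \sum_(k < r) Dk k.
have Q0 : 0 <= Q by rewrite mulr_ge0 ?exprn_ge0 ?sumr_ge0.
exists (A / (Q + 1)); split=> [|x x_l2]; first by rewrite divr_gt0 ?ltr_wpDl.
have xf_fin k := bessel_fin (f_bessel j k) x_l2.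
pose S k := fine (esum setT (fun n => (abs2 (inner x (f j k n)))%:E)).
have SE k : esum setT (fun n => (abs2 (inner x (f j k n)))%:E) = (S k)%:E.
  by rewrite fineK ?esum_EFin_fin_num // => n; exact: abs2_ge0.
have S0 k : 0 <= S k by rewrite -lee_fin -SE esum_ge0 // => n _; rewrite lee_fin abs2_ge0.
rewrite esum_pair => [|kn]; last by rewrite lee_fin abs2_ge0.
under eq_bigr do rewrite SE; rewrite sumEFin.
have sx_fin : sqnorm x \is a fin_num.
  by rewrite ge0_fin_numE ?x_l2.2 // esum_ge0 // => t _; rewrite lee_fin abs2_ge0.
rewrite -(fineK sx_fin) -EFinM lee_fin; set sx := fine (sqnorm x).
have main : A * sx <= Q * \sum_(k < r) S k.
  rewrite -lee_fin EFinM /sx fineK //.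
  have := F_lower _ (l2_line_embed pI x_l2); rewrite sqnorm_line_embed => /le_trans; apply.
  apply: le_trans (esum_inner_line_embed_le pI x_l2 f_fin xf_fin) _.
  rewrite lee_fin /Q -mulrA ler_wpM2l ?exprn_ge0 //.
  under eq_bigr do rewrite -/(S _) -/(Dk _) mulrC.
  exact: sum_mul_le_mul_sum.
have sx0 : 0 <= sx by rewrite fine_ge0 // esum_ge0 // => t _; rewrite lee_fin abs2_ge0.
have SS0 : 0 <= \sum_(k < r) S k by rewrite sumr_ge0.
by rewrite mulrAC ler_pdivrMr ?ltr_wpDl //; nra.
Qed.

End tensor_frames.

Unset Implicit Arguments. Set Strict Implicit. Set Printing Implicit Defensive.

Theorem theorem1p3 (R : realType) (d r : nat) (I : 'I_d -> set nat)
    (f : 'I_d -> 'I_r -> nat -> nat -> R[i]) :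
  (1 < d)%N -> (0 < r)%N ->
  (forall j k n, l2 (I j) (f j k n)) ->
  (forall (j : 'I_d) (c : 'I_r -> R[i]),
      (forall n i, \sum_(k < r) c k * f j k n i = 0) -> forall k, c k = 0) ->
  (bessel (prodset I) (Fseq f) <-> (forall j k, bessel (I j) (f j k)))
  /\
  (frame (prodset I) (Fseq f) ->
     forall j, frame (I j) (fun p : 'I_r * nat => f j p.1 p.2)).
Proof.
move=> d_gt1 r_gt0 f_l2 f_indep.
have f_free j : free_family (fun k (np : nat * nat) => f j k np.1 np.2).
  by move=> c c0; apply: f_indep => n t; exact: (c0 (n, t)).
split; first split.
- exact: (bessel_factor f_l2 d_gt1 r_gt0 f_free).
- exact: (bessel_Fseq f_l2).
- exact: (frame_factor f_l2 d_gt1 r_gt0 f_free).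
Qed.
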